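(* Let $g$ be a growth control function and $(p_j)_{j\in\mathbb{N}_0}$ a strictly increasing sequence of integers with $p_0=0$, and let $\boldsymbol{M}$ be the sequence with $M_0=1$ whose quotients are $m_p=g(p_j)$ for $p_j\le p<p_{j+1}$, $j\in\mathbb{N}_0$ (so $M_p=m_0\cdots m_{p-1}$). If $\sup_{j\in\mathbb{N}}p_{j+1}/p_j=+\infty$, then $\gamma(\boldsymbol{M})=0$.
   Context: A growth control function is a strictly increasing function $g\colon[0,\infty)\to[1,\infty)$ with $g(0)=1$ and $\lim_{t\to\infty}g(t)=\infty$. A sequence $(c_p)$ is almost increasing if there is $a>0$ with $c_p\le ac_q$ for all $q\ge p$. For a sequence with quotients $m_p$, $\gamma(\boldsymbol{M})=\sup\{\mu>0:(m_p/(p+1)^\mu)_p\text{ is almost increasing}\}\in[0,\infty]$, with the value $0$ if the set is empty. *)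

From Stdlib Require Import Reals Lra ClassicalEpsilon.
From Coquelicot Require Import Coquelicot.
Open Scope R_scope.

Definition growth_control (g : R -> R) : Prop :=
  (forall t, 0 <= t -> 1 <= g t) /\
  (forall s t, 0 <= s -> s < t -> g s < g t) /\
  g 0 = 1 /\
  is_lim g p_infty p_infty.

Definition almost_increasing (c : nat -> R) : Prop :=
  exists a, 0 < a /\ forall p q : nat, (p <= q)%nat -> c p <= a * c q.

Definition gamma_set (m : nat -> R) (mu : R) : Prop :=
  0 < mu /\ almost_increasing (fun p => m p / Rpower (INR p + 1) mu).

(* gamma(M) in [0,+oo] (as an Rbar); value 0 if the set is empty *)
Definition gamma_index (m : nat -> R) : Rbar :=
  if excluded_middle_informative (exists mu, gamma_set m mu)
  then Lub_Rbar (gamma_set m)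
  else Finite 0.

Definition sup_ratio (p : nat -> nat) : Rbar :=
  Lub_Rbar (fun x => exists j : nat, (1 <= j)%nat /\ x = INR (p (S j)) / INR (p j)).

(* If [m p / (p+1)^mu] is almost increasing with constant [a], then on a block
   [P <= q <= Q] where [m] is constant the weights satisfy
   [(Q+1)^mu <= a (P+1)^mu], so [(Q+1)/(P+1) <= a^(1/mu)].  The blocks of [m] are
   [p_j <= q < p_(j+1)], whence [p_(j+1)/p_j <= 2 a^(1/mu)] for all [j >= 1],
   contradicting the unbounded ratios.  So no [mu > 0] is admissible. *)
From Stdlib Require Import Reals Lra Lia ClassicalEpsilon Classical_Prop.
From Coquelicot Require Import Coquelicot.
Open Scope R_scope.

Lemma Rpower_pos (x y : R) : 0 < Rpower x y.
Proof. apply exp_pos. Qed.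

Lemma Rpower_le_root (x y mu : R) :
  0 < x -> 0 < mu -> Rpower x mu <= y -> x <= Rpower y (/ mu).
Proof.
  intros Hx Hmu Hle.
  rewrite <- (Rpower_1 x Hx), <- (Rinv_r mu) by lra.
  rewrite <- Rpower_mult.
  apply Rle_Rpower_l; [left; apply Rinv_0_lt_compat; lra |].
  split; [apply Rpower_pos | exact Hle].
Qed.

Lemma gamma_set_block_bound (m : nat -> R) (mu : R) :
  gamma_set m mu ->
  exists K, 0 < K /\
    forall P Q : nat, (P <= Q)%nat -> m Q = m P -> 0 < m P ->
      INR Q + 1 <= K * (INR P + 1).
Proof.
  intros [Hmu [a [Ha Hinc]]].
  exists (Rpower a (/ mu)); split; [apply Rpower_pos |].
  intros P Q HPQ HmQ HmP.
  assert (HP : 0 < INR P + 1) by (pose proof (pos_INR P); lra).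
  assert (HQ : 0 < INR Q + 1) by (pose proof (pos_INR Q); lra).
  set (wP := Rpower (INR P + 1) mu).
  set (wQ := Rpower (INR Q + 1) mu).
  assert (HwP : 0 < wP) by apply Rpower_pos.
  assert (HwQ : 0 < wQ) by apply Rpower_pos.
  assert (Hweights : wQ <= a * wP).
  { specialize (Hinc P Q HPQ); simpl in Hinc; fold wP wQ in Hinc.
    rewrite HmQ in Hinc.
    apply Rmult_le_reg_r with (m P / (wP * wQ)).
    - apply Rdiv_lt_0_compat; nra.
    - replace (wQ * (m P / (wP * wQ))) with (m P / wP) by (field; lra).
      replace (a * wP * (m P / (wP * wQ))) with (a * (m P / wQ)) by (field; lra).
      exact Hinc. }
  apply Rpower_le_root in Hweights; [| exact HQ | exact Hmu].
  rewrite <- Rpower_mult_distr in Hweights by assumption.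
  unfold wP in Hweights; rewrite Rpower_mult, Rinv_r, Rpower_1 in Hweights by lra.
  exact Hweights.
Qed.

Lemma Lub_Rbar_p_infty_unbounded (E : R -> Prop) :
  Lub_Rbar E = p_infty -> forall K, exists x, E x /\ K < x.
Proof.
  intros Hlub K; apply NNPP; intro Hnone.
  destruct (Lub_Rbar_correct E) as [_ Hleast].
  assert (Hub : is_ub_Rbar E K).
  { intros x Hx; simpl; apply Rnot_lt_le; intro Hlt; apply Hnone; eauto. }
  specialize (Hleast K Hub); rewrite Hlub in Hleast; exact Hleast.
Qed.

Lemma strict_increasing_ge_id (p : nat -> nat) :
  (forall j, (p j < p (S j))%nat) -> forall j, (j <= p j)%nat.
Proof. intros Hinc j; induction j; [lia | specialize (Hinc j); lia]. Qed.

Theorem proposition4p9 (g : R -> R) (p : nat -> nat) (m : nat -> R) :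
  growth_control g ->
  (forall j : nat, (p j < p (S j))%nat) ->
  p 0%nat = 0%nat ->
  (forall (j q : nat), (p j <= q < p (S j))%nat -> m q = g (INR (p j))) ->
  sup_ratio p = p_infty ->
  gamma_index m = Finite 0.
Proof.
  intros [Hg_ge1 _] Hinc _ Hblock Hsup.
  unfold gamma_index.
  destruct (excluded_middle_informative _) as [[mu Hmu] | _]; [exfalso | reflexivity].
  destruct (gamma_set_block_bound m mu Hmu) as [K [HK Hbound]].
  destruct (Lub_Rbar_p_infty_unbounded _ Hsup (2 * K)) as [r [[j [Hj ->]] Hratio]].
  pose proof (strict_increasing_ge_id p Hinc j) as Hj_le.
  pose proof (Hinc j) as Hstep.
  assert (Hpj : 1 <= INR (p j)) by (apply (le_INR 1); lia).
  assert (HmP : m (p j) = g (INR (p j))) by (apply Hblock; lia).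
  assert (HmQ : m (p (S j) - 1)%nat = g (INR (p j))) by (apply Hblock; lia).
  assert (Hpos : 0 < m (p j)) by (rewrite HmP; pose proof (Hg_ge1 _ (pos_INR (p j))); lra).
  specialize (Hbound (p j) (p (S j) - 1)%nat ltac:(lia) ltac:(congruence) Hpos).
  rewrite minus_INR in Hbound by lia; simpl in Hbound.
  apply (Rmult_lt_compat_r (INR (p j))) in Hratio; [| lra].
  replace (INR (p (S j)) / INR (p j) * INR (p j)) with (INR (p (S j))) in Hratio
    by (field; lra).
  nra.
Qed.
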